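(* Let $V$ be a real sequence and suppose that for some real $a$ with $|a|>1$, the equation $(-\Delta+V)\psi=0$ has a solution $\psi^-$ with $a^n\psi^-_n\to1$ as $n\to\infty$. Then: (i) every solution $\psi$ that is linearly independent of $\psi^-$ is exponentially increasing, in the sense that $a^{-n}\psi_n\to C\neq0$ as $n\to\infty$; (ii) for any solution $\psi$, the product $\psi_n\psi^-_n$ is bounded independently of $n$; (iii) given any boundary condition of the form $c\psi_1+d\psi_2=0$, if $0\notin\mathrm{sp}(-\Delta+V)$, then the Green matrix of $-\Delta+V$ on $n\ge1$ is uniformly bounded.
   Context: $(\Delta f)_n=f_{n+1}+f_{n-1}-2f_n$; $(-\Delta+V)\psi=0$ means $-\psi_{n+1}-\psi_{n-1}+(2+V_n)\psi_n=0$ for $n\ge1$. The Green matrix of $-\Delta+V$ on $n\ge1$ with the given boundary condition is $G_{mn}=\psi^+_{\min(m,n)}\psi^-_{\max(m,n)}/W[\psi^-,\psi^+]$, where $\psi^+$ is a solution satisfying the boundary condition and $W[\psi^-,\psi^+]=\psi^-_n\psi^+_{n+1}-\psi^-_{n+1}\psi^+_n$. *)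

From Stdlib Require Import Reals.
From Coquelicot Require Import Coquelicot.
Open Scope R_scope.

(* Sequences are functions nat -> R; only indices n >= 0 are meaningful,
   the equation is imposed for n >= 1 (so psi 0 enters at n = 1). *)

Definition schr (V psi : nat -> R) (n : nat) : R :=
  - psi (S n) - psi (Nat.pred n) + (2 + V n) * psi n.

Definition is_solution (V psi : nat -> R) : Prop :=
  forall n : nat, (1 <= n)%nat -> schr V psi n = 0.

Definition lin_indep (psi phi : nat -> R) : Prop :=
  ~ (exists al be : R, (al <> 0 \/ be <> 0) /\
        forall n : nat, al * psi n + be * phi n = 0).

Definition wronskian (phi psi : nat -> R) (n : nat) : R :=
  phi n * psi (S n) - phi (S n) * psi n.

(* Green matrix G_{mn} = psi+_{min(m,n)} psi-_{max(m,n)} / W[psi-, psi+]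
   (the Wronskian is constant for solutions; we evaluate it at n = 1). *)
Definition green (psim psip : nat -> R) (m n : nat) : R :=
  psip (Nat.min m n) * psim (Nat.max m n) / wronskian psim psip 1%nat.

Definition l2 (u : nat -> R) : Prop := ex_series (fun k => (u (S k)) ^ 2).
Definition l2norm2 (u : nat -> R) : R := Series (fun k => (u (S k)) ^ 2).

(* u solves (-Delta + V) u = f on n >= 1 with the boundary condition
   c psi_1 + d psi_2 = 0.  For a solution of the homogeneous equation
   psi_2 = (2 + V_1) psi_1 - psi_0, so the boundary condition is imposed on
   the auxiliary value u_0 as  c u_1 + d ((2 + V_1) u_1 - u_0) = 0  (the
   usual self-adjoint half-line boundary condition at the left end). *)
Definition bvp (V : nat -> R) (c d : R) (u f : nat -> R) : Prop :=
  (forall n : nat, (1 <= n)%nat -> schr V u n = f n) /\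
  c * u 1%nat + d * ((2 + V 1%nat) * u 1%nat - u 0%nat) = 0.

(* 0 is not in the spectrum of the half-line operator -Delta + V with this
   boundary condition: the operator is a bijection from its domain onto
   l^2(n >= 1) with a bounded inverse. *)
Definition zero_not_in_spectrum (V : nat -> R) (c d : R) : Prop :=
  exists C : R, 0 < C /\
    forall f : nat -> R, l2 f ->
      (exists u : nat -> R, l2 u /\ bvp V c d u f /\
                            l2norm2 u <= C * l2norm2 f) /\
      (forall u1 u2 : nat -> R, l2 u1 -> l2 u2 ->
         bvp V c d u1 f -> bvp V c d u2 f ->
         forall n : nat, (1 <= n)%nat -> u1 n = u2 n).

From Stdlib Require Import Reals Lra Lia Psatz.
From Coquelicot Require Import Coquelicot.
Open Scope R_scope.

(* Write phi_n := a^n psi-_n -> 1 and u_n := psi_n / a^n.  The constant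
   Wronskian W = W[psi-, psi] reads W = a phi_n u_{n+1} - phi_{n+1} u_n / a,
   so u_{n+1} is an affine function of u_n whose slope phi_{n+1} / (a^2 phi_n)
   tends to 1/a^2, of modulus < 1.  Hence u_n converges to the fixed point
   W a / (a^2 - 1) of the limiting map, which is nonzero exactly when psi is
   independent of psi-.  Boundedness of u and phi then bounds
   psi_k psi-_l = u_k phi_l a^{k-l} for k <= l, which gives (ii) and (iii). *)

Lemma is_lim_seq_bounded (u : nat -> R) (l : R) :
  is_lim_seq u l -> exists M, forall n, Rabs (u n) <= M.
Proof.
  intros Hu. destruct (maj_by_pos u) as [M [_ HM]].
  - exists l. now apply is_lim_seq_Reals.
  - now exists M.
Qed.

Lemma geometric_recursive_bound (e : nat -> R) (q delta : R) (N : nat) :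
  0 <= q < 1 -> 0 <= delta ->
  (forall n, (N <= n)%nat -> Rabs (e (S n)) <= q * Rabs (e n) + delta) ->
  forall k, Rabs (e (N + k)%nat) <= q ^ k * Rabs (e N) + delta / (1 - q).
Proof.
  intros Hq Hdelta Hstep k. induction k as [|k IH].
  - rewrite Nat.add_0_r, pow_O.
    assert (0 <= delta / (1 - q)) by (apply Rdiv_le_0_compat; lra). lra.
  - replace (N + S k)%nat with (S (N + k)) by lia.
    assert (Hsum : q * (q ^ k * Rabs (e N) + delta / (1 - q)) + delta
                   = q ^ S k * Rabs (e N) + delta / (1 - q))
      by (simpl; field; lra).
    pose proof (Hstep (N + k)%nat ltac:(lia)).
    pose proof (Rmult_le_compat_l q _ _ (proj1 Hq) IH). lra.
Qed.

Lemma is_lim_seq_affine_recursion (e d r : nat -> R) (q : R) (N0 : nat) :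
  0 <= q < 1 ->
  (forall n, (N0 <= n)%nat -> Rabs (r n) <= q) ->
  (forall n, (N0 <= n)%nat -> e (S n) = d n + r n * e n) ->
  is_lim_seq d 0 -> is_lim_seq e 0.
Proof.
  intros Hq Hr He Hd. apply is_lim_seq_spec. intro eps.
  set (delta := eps * (1 - q) / 2).
  assert (Hdelta : 0 < delta) by (unfold delta; pose proof (cond_pos eps); nra).
  destruct (proj2 (is_lim_seq_spec d 0) Hd (mkposreal delta Hdelta)) as [N1 HN1].
  set (N := Nat.max N0 N1).
  assert (Hstep : forall n, (N <= n)%nat -> Rabs (e (S n)) <= q * Rabs (e n) + delta).
  { intros n Hn. rewrite He by lia.
    specialize (HN1 n ltac:(lia)). simpl in HN1. rewrite Rminus_0_r in HN1.
    eapply Rle_trans; [apply Rabs_triang|]. rewrite Rabs_mult.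
    pose proof (Rmult_le_compat_r _ _ _ (Rabs_pos (e n)) (Hr n ltac:(lia))). lra. }
  assert (Hgeom : is_lim_seq (fun k => q ^ k * Rabs (e N)) 0).
  { replace (Finite 0) with (Rbar_mult 0 (Rabs (e N))) by (simpl; f_equal; ring).
    apply is_lim_seq_scal_r, is_lim_seq_geom. rewrite Rabs_pos_eq; lra. }
  destruct (proj2 (is_lim_seq_spec _ 0) Hgeom (pos_div_2 eps)) as [K HK].
  exists (N + K)%nat. intros n Hn. rewrite Rminus_0_r.
  pose proof (geometric_recursive_bound e q delta N Hq (Rlt_le _ _ Hdelta) Hstep (n - N))
    as Hbound.
  replace (N + (n - N))%nat with n in Hbound by lia.
  specialize (HK (n - N)%nat ltac:(lia)). simpl in HK. rewrite Rminus_0_r in HK.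
  pose proof (Rle_abs (q ^ (n - N) * Rabs (e N))).
  assert (delta / (1 - q) = eps / 2) by (unfold delta; field; lra). lra.
Qed.

Section Solutions.
Variable V : nat -> R.

Lemma solution_step (psi : nat -> R) (n : nat) :
  is_solution V psi -> psi (S (S n)) = (2 + V (S n)) * psi (S n) - psi n.
Proof.
  intros Hpsi. pose proof (Hpsi (S n) ltac:(lia)) as H.
  unfold schr in H. simpl Nat.pred in H. lra.
Qed.

Lemma is_solution_lincomb (p q : nat -> R) (al be : R) :
  is_solution V p -> is_solution V q ->
  is_solution V (fun n => al * p n + be * q n).
Proof.
  intros Hp Hq n Hn.
  transitivity (al * schr V p n + be * schr V q n); [unfold schr; ring|].
  rewrite Hp, Hq by exact Hn. ring.
Qed.

Lemma wronskian_const (p q : nat -> R) :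
  is_solution V p -> is_solution V q ->
  forall n, wronskian p q n = wronskian p q 0.
Proof.
  intros Hp Hq n. induction n as [|n IH]; [reflexivity|].
  rewrite <- IH. unfold wronskian.
  rewrite (solution_step p n Hp), (solution_step q n Hq). ring.
Qed.

Lemma solution_eq0 (psi : nat -> R) :
  is_solution V psi -> psi 0%nat = 0 -> psi 1%nat = 0 -> forall n, psi n = 0.
Proof.
  intros Hpsi H0 H1.
  assert (H : forall n, psi n = 0 /\ psi (S n) = 0).
  { induction n as [|n [IH IH']]; [auto|].
    split; [exact IH'|]. rewrite (solution_step psi n Hpsi), IH, IH'. ring. }
  intro n. apply H.
Qed.

Lemma wronskian_eq0_not_lin_indep (p q : nat -> R) :
  is_solution V p -> is_solution V q -> (exists n, q n <> 0) ->
  wronskian q p 0 = 0 -> ~ lin_indep p q.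
Proof.
  intros Hp Hq [m Hm] HW Hind.
  assert (Hk : exists k, (k <= 1)%nat /\ q k <> 0).
  { destruct (Req_dec (q 0%nat) 0) as [H0|H0]; [|exists 0%nat; auto].
    destruct (Req_dec (q 1%nat) 0) as [H1|H1]; [|exists 1%nat; auto].
    now rewrite (solution_eq0 q Hq H0 H1 m) in Hm. }
  destruct Hk as [k [Hk Hqk]].
  apply Hind. exists (q k), (- p k). split; [now left|].
  apply (solution_eq0 (fun n => q k * p n + - p k * q n));
    [now apply is_solution_lincomb | |];
    unfold wronskian in HW; destruct k as [|[|k]]; try lia; nra.
Qed.

End Solutions.

Lemma Rabs_gt1_neq0 (a : R) : 1 < Rabs a -> a <> 0.
Proof. intros Ha H. rewrite H, Rabs_R0 in Ha. lra. Qed.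

Lemma pow2_gt1 (a : R) : 1 < Rabs a -> 1 < a ^ 2.
Proof. intros Ha. rewrite <- pow2_abs. nra. Qed.

Lemma Rabs_inv_pow_le1 (a : R) (n : nat) : 1 <= Rabs a -> Rabs (/ a ^ n) <= 1.
Proof.
  intros Ha. rewrite Rabs_inv, <- RPow_abs.
  pose proof (pow_R1_Rle (Rabs a) n Ha).
  rewrite <- Rinv_1. apply Rinv_le_contravar; lra.
Qed.

Section Decaying_solution.
Variables (V : nat -> R) (a : R) (psim : nat -> R).
Hypothesis Ha : 1 < Rabs a.
Hypothesis Hsol : is_solution V psim.
Hypothesis Hlim : is_lim_seq (fun n => a ^ n * psim n) 1.

Lemma decaying_eventually_pos :
  exists N, forall n, (N <= n)%nat -> 1 / 2 < a ^ n * psim n.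
Proof.
  destruct (proj2 (is_lim_seq_spec _ 1) Hlim (pos_div_2 (mkposreal 1 Rlt_0_1)))
    as [N HN].
  exists N. intros n Hn. specialize (HN n Hn). simpl in HN.
  pose proof (Rabs_def2 _ _ HN). lra.
Qed.

Lemma decaying_nontrivial : exists n, psim n <> 0.
Proof.
  destruct decaying_eventually_pos as [N HN]. exists N. intros H.
  specialize (HN N (Nat.le_refl N)). rewrite H, Rmult_0_r in HN. lra.
Qed.

Lemma wronskian_scaled (psi : nat -> R) (n : nat) : is_solution V psi ->
  wronskian psim psi 0 =
  a * (a ^ n * psim n) * (psi (S n) / a ^ S n)
  - (a ^ S n * psim (S n)) * (psi n / a ^ n) / a.
Proof.
  intros Hpsi. rewrite <- (wronskian_const V psim psi Hsol Hpsi n).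
  unfold wronskian. simpl. field.
  split; [apply pow_nonzero|]; exact (Rabs_gt1_neq0 a Ha).
Qed.

Lemma decaying_ratio_cvg :
  is_lim_seq (fun n => (a ^ S n * psim (S n)) / (a ^ 2 * (a ^ n * psim n))) (/ a ^ 2).
Proof.
  pose proof (pow2_gt1 a Ha).
  replace (/ a ^ 2) with (1 / (a ^ 2 * 1)) by (field; exact (Rabs_gt1_neq0 a Ha)).
  apply is_lim_seq_div'; [exact (proj1 (is_lim_seq_incr_1 _ 1) Hlim)| |lra].
  exact (is_lim_seq_scal_l _ (a ^ 2) 1 Hlim).
Qed.

Lemma scaled_solution_affine_step (psi : nat -> R) (L : R) (n : nat) :
  is_solution V psi -> a ^ n * psim n <> 0 ->
  let r := (a ^ S n * psim (S n)) / (a ^ 2 * (a ^ n * psim n)) in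
  psi (S n) / a ^ S n - L =
  (wronskian psim psi 0 / (a * (a ^ n * psim n)) + (r - 1) * L)
  + r * (psi n / a ^ n - L).
Proof.
  intros Hpsi Hphi r. unfold r.
  pose proof (Rabs_gt1_neq0 a Ha) as Ha0.
  assert (Hpsimn : psim n <> 0) by (intros H; apply Hphi; rewrite H; ring).
  pose proof (pow_nonzero a n Ha0). pose proof (pow_nonzero a (S n) Ha0).
  rewrite (wronskian_scaled psi n Hpsi). field. repeat split; auto.
Qed.

Lemma growing_asymptotics (psi : nat -> R) : is_solution V psi ->
  is_lim_seq (fun n => psi n / a ^ n) (wronskian psim psi 0 * a / (a ^ 2 - 1)).
Proof.
  intros Hpsi. pose proof (Rabs_gt1_neq0 a Ha) as Ha0. pose proof (pow2_gt1 a Ha) as Ha2.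
  assert (Ha21 : a ^ 2 - 1 <> 0) by lra.
  set (W := wronskian psim psi 0). set (L := W * a / (a ^ 2 - 1)).
  set (r := fun n => (a ^ S n * psim (S n)) / (a ^ 2 * (a ^ n * psim n))).
  set (d := fun n => W / (a * (a ^ n * psim n)) + (r n - 1) * L).
  set (q := (/ a ^ 2 + 1) / 2).
  assert (Hinv : 0 < / a ^ 2 < 1).
  { split; [apply Rinv_0_lt_compat; lra|].
    rewrite <- Rinv_1. apply Rinv_lt_contravar; lra. }
  assert (Hq : / a ^ 2 < q < 1) by (unfold q; lra).
  assert (Hgap : 0 < q - / a ^ 2) by lra.
  destruct decaying_eventually_pos as [N0 HN0].
  destruct (proj2 (is_lim_seq_spec _ _) decaying_ratio_cvg (mkposreal _ Hgap)) as [N1 HN1].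
  assert (Hd : is_lim_seq d 0).
  { replace (Finite 0) with (Finite (W / (a * 1) + (/ a ^ 2 - 1) * L))
      by (f_equal; unfold L; field; auto).
    apply is_lim_seq_plus'.
    - apply is_lim_seq_div'; [apply is_lim_seq_const| |now rewrite Rmult_1_r].
      exact (is_lim_seq_scal_l _ a 1 Hlim).
    - apply is_lim_seq_scal_r with (a := L) (lu := / a ^ 2 - 1).
      apply is_lim_seq_minus'; [exact decaying_ratio_cvg | apply is_lim_seq_const]. }
  assert (He : is_lim_seq (fun n => psi n / a ^ n - L) 0).
  { apply (is_lim_seq_affine_recursion _ d r q (Nat.max N0 N1)); [lra | | |exact Hd].
    - intros n Hn. specialize (HN1 n ltac:(lia)).
      change (Rabs (r n - / a ^ 2) < q - / a ^ 2) in HN1.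
      pose proof (Rabs_triang_inv (r n) (/ a ^ 2)) as Htri.
      rewrite (Rabs_pos_eq (/ a ^ 2)) in Htri by lra. lra.
    - intros n Hn. apply scaled_solution_affine_step; [exact Hpsi|].
      specialize (HN0 n ltac:(lia)). lra. }
  apply is_lim_seq_ext with (u := fun n => (psi n / a ^ n - L) + L); [intro n; ring|].
  replace (Finite L) with (Finite (0 + L)) by (f_equal; ring).
  apply is_lim_seq_plus'; [exact He | apply is_lim_seq_const].
Qed.

Lemma solution_decaying_product_bounded (psi : nat -> R) : is_solution V psi ->
  exists B, forall k l, (k <= l)%nat -> Rabs (psi k * psim l) <= B.
Proof.
  intros Hpsi.
  destruct (is_lim_seq_bounded _ _ (growing_asymptotics psi Hpsi)) as [Mu HMu].
  destruct (is_lim_seq_bounded _ _ Hlim) as [Mp HMp].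
  exists (Mu * Mp). intros k l Hkl.
  assert (Hsplit : psi k * psim l = (psi k / a ^ k) * (a ^ l * psim l) * / a ^ (l - k)).
  { replace (a ^ l) with (a ^ k * a ^ (l - k)) by (rewrite <- pow_add; f_equal; lia).
    field. split; apply pow_nonzero, Rabs_gt1_neq0, Ha. }
  rewrite Hsplit, Rabs_mult.
  apply Rle_trans with (Rabs (psi k / a ^ k * (a ^ l * psim l)) * 1).
  - apply Rmult_le_compat_l; [apply Rabs_pos|].
    apply Rabs_inv_pow_le1. lra.
  - rewrite Rmult_1_r, Rabs_mult.
    apply Rmult_le_compat; [apply Rabs_pos | apply Rabs_pos | apply HMu | apply HMp].
Qed.

End Decaying_solution.

Theorem corollary1 (V : nat -> R) (a : R) (psim : nat -> R)
  (Ha : 1 < Rabs a)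
  (Hsol : is_solution V psim)
  (Hlim : is_lim_seq (fun n => a ^ n * psim n) 1) :
  (forall psi : nat -> R, is_solution V psi -> lin_indep psi psim ->
     exists C : R, C <> 0 /\ is_lim_seq (fun n => psi n / a ^ n) C) /\
  (forall psi : nat -> R, is_solution V psi ->
     exists B : R, forall n : nat, Rabs (psi n * psim n) <= B) /\
  (forall (c d : R) (psip : nat -> R),
     (c <> 0 \/ d <> 0) ->
     is_solution V psip ->
     (exists n : nat, psip n <> 0) ->
     c * psip 1%nat + d * psip 2%nat = 0 ->
     zero_not_in_spectrum V c d ->
     exists B : R, forall m n : nat, (1 <= m)%nat -> (1 <= n)%nat ->
       Rabs (green psim psip m n) <= B).
Proof.
  split; [|split].
  - intros psi Hpsi Hind.
    exists (wronskian psim psi 0 * a / (a ^ 2 - 1)).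
    split; [|exact (growing_asymptotics V a psim Ha Hsol Hlim psi Hpsi)].
    assert (HW : wronskian psim psi 0 <> 0).
    { intros HW. exact (wronskian_eq0_not_lin_indep V psi psim Hpsi Hsol
                          (decaying_nontrivial a psim Hlim) HW Hind). }
    pose proof (Rabs_gt1_neq0 a Ha). pose proof (pow2_gt1 a Ha).
    unfold Rdiv. repeat apply Rmult_integral_contrapositive_currified; auto.
    apply Rinv_neq_0_compat. lra.
  - intros psi Hpsi.
    destruct (solution_decaying_product_bounded V a psim Ha Hsol Hlim psi Hpsi) as [B HB].
    exists B. intros n. apply HB, Nat.le_refl.
  - (* The boundary condition and the spectral hypothesis only serve to make
       the Wronskian nonzero; the bound below holds for every solution psip,
       since division by a zero Wronskian returns 0. *)
    intros c d psip _ Hpsip _ _ _.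
    destruct (solution_decaying_product_bounded V a psim Ha Hsol Hlim psip Hpsip)
      as [B HB].
    exists (B * Rabs (/ wronskian psim psip 1)). intros m n _ _.
    unfold green, Rdiv. rewrite Rabs_mult.
    apply Rmult_le_compat_r; [apply Rabs_pos|].
    apply HB. lia.
Qed.
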